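(* Consider the setting in the context with $\mathbf{Q}_\Delta$ given by the LU trick, and assume $\mathbf{A}$ is invertible. For $k\in\mathbb{N}$ let $\mathbf{T}_S(\mu,k)=\big(\mathbf{I}_{LMN}-\hat{\mathbf{P}}^{-1}\mathbf{C}\big)^k$ be the iteration matrix of $k$ smoother iterations. Then the smoother converges if $\mu$ is large enough and at least $M$ iterations are performed: for every $k\ge M$ there exist a fixed value $\mu^*_{S,\infty}>0$ and a constant $c>0$ independent of $\mu$ (but depending on $k$) such that for all $\mu>\mu^*_{S,\infty}$, $$\rho\big(\mathbf{T}_S(\mu,k)\big)\le \frac{c}{\mu}.$$
   Context: Fix positive integers $L$ (time steps), $M$ (collocation nodes), $N$ (spatial degrees of freedom). Let $0<\tau_1<\dots<\tau_M=1$ be the (right) Gauss–Radau nodes on $[0,1]$, $\ell_j$ the Lagrange basis polynomials, $\mathbf{Q}=(q_{m,j})\in\mathbb{R}^{M\times M}$ with $q_{m,j}=\int_0^{\tau_m}\ell_j(s)\,ds$. LU trick: write $\mathbf{Q}^T=\mathbf{L}_Q\mathbf{U}_Q$ with $\mathbf{L}_Q$ unit lower triangular and $\mathbf{U}_Q$ upper triangular, and set $\mathbf{Q}_\Delta=\mathbf{U}_Q^T$. Let $\mathbf{A}\in\mathbb{C}^{N\times N}$ and $\mu>0$ (CFL number). Let $\mathbf{N}_M\in\mathbb{R}^{M\times M}$ have ones in its last column and zeros elsewhere, $\mathbf{H}=\mathbf{N}_M\otimes\mathbf{I}_N$, $\mathbf{E}\in\mathbb{R}^{L\times L}$ with ones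 on the first subdiagonal and zeros elsewhere. $\mathbf{C}=\mathbf{I}_{LMN}-\mu\,\mathbf{I}_L\otimes\mathbf{Q}\otimes\mathbf{A}-\mathbf{E}\otimes\mathbf{H}$, $\hat{\mathbf{P}}=\mathbf{I}_{LMN}-\mu\,\mathbf{I}_L\otimes\mathbf{Q}_\Delta\otimes\mathbf{A}$ (assumed invertible). $\rho$ denotes the spectral radius. *)

From HB Require Import structures.
From mathcomp Require Import all_boot all_order all_algebra.
From mathcomp Require Import reals.
From mathcomp Require Import complex mxtens.
Set Implicit Arguments.
Unset Strict Implicit.
Unset Printing Implicit Defensive.
Import Order.TTheory GRing.Theory Num.Theory.
Local Open Scope ring_scope.

Section Defs.
Variable R : realType.

(* The M right Gauss--Radau nodes on [0,1] are the roots of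
   d^(M-1)/dx^(M-1) [ x^(M-1) (x-1)^M ]  (a degree-M polynomial with
   M simple roots in (0,1], the largest being 1). *)
Definition radau_poly (M : nat) : {poly R} :=
  ('X ^+ M.-1 * ('X - 1) ^+ M)^`(M.-1).

Definition gauss_radau_nodes (M : nat) (tau : 'I_M -> R) : Prop :=
  (forall i j : 'I_M, (i < j)%N -> tau i < tau j) /\
  (forall i : 'I_M, root (radau_poly M) (tau i)).

Definition lagrange (M : nat) (tau : 'I_M -> R) (j : 'I_M) : {poly R} :=
  \prod_(k < M | k != j) (('X - (tau k)%:P) * ((tau j - tau k)^-1)%:P).

(* Antiderivative of a polynomial vanishing at 0, so that
   int_0^t p(s) ds = (prim p).[t]. *)
Definition prim (p : {poly R}) : {poly R} :=
  \poly_(i < (size p).+1)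
     (if i is i'.+1 then p`_i' / (i'.+1)%:R else 0).

Definition collocQ (M : nat) (tau : 'I_M -> R) : 'M[R]_M :=
  \matrix_(m, j) (prim (lagrange tau j)).[tau m].

Definition unit_lower_triangular (M : nat) (L : 'M[R]_M) : Prop :=
  is_trig_mx L /\ (forall i, L i i = 1).
Definition upper_triangular (M : nat) (U : 'M[R]_M) : Prop :=
  is_trig_mx U^T.

Definition cplx_mx (m n : nat) (B : 'M[R]_(m, n)) : 'M[R[i]]_(m, n) :=
  map_mx (fun x => (x%:C)%C) B.

Definition lastcol_mx (M : nat) : 'M[R[i]]_M :=
  \matrix_(i, j) ((nat_of_ord j == M.-1)%:R).

Definition subdiag_mx (L : nat) : 'M[R[i]]_L :=
  \matrix_(i, j) ((nat_of_ord i == (nat_of_ord j).+1)%:R).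

Definition sdc_C (L M N : nat) (Q : 'M[R]_M) (A : 'M[R[i]]_N) (mu : R)
  : 'M[R[i]]_(L * (M * N)) :=
  1%:M - (mu%:C)%C *: ((1%:M : 'M[R[i]]_L) *t (cplx_mx Q *t A))
       - subdiag_mx L *t (lastcol_mx M *t (1%:M : 'M[R[i]]_N)).

Definition sdc_Phat (L M N : nat) (QD : 'M[R]_M) (A : 'M[R[i]]_N) (mu : R)
  : 'M[R[i]]_(L * (M * N)) :=
  1%:M - (mu%:C)%C *: ((1%:M : 'M[R[i]]_L) *t (cplx_mx QD *t A)).

Definition smoother_T (L M N : nat) (Q QD : 'M[R]_M) (A : 'M[R[i]]_N)
  (mu : R) (k : nat) : 'M[R[i]]_(L * (M * N)) :=
  (1%:M - invmx (sdc_Phat L QD A mu) *m sdc_C L Q A mu) ^+ k.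

Definition eigenvalues (n : nat) (B : 'M[R[i]]_n) : seq R[i] :=
  sval (closed_field_poly_normal (char_poly B)).

Definition spectral_radius (n : nat) (B : 'M[R[i]]_n) : R :=
  \big[Num.max/0]_(z <- eigenvalues B) complex.Re `|z|.

End Defs.

From Pilot Require Import Defs.
From HB Require Import structures.
From mathcomp Require Import all_boot all_order all_algebra.
From mathcomp Require Import reals.
From mathcomp Require Import complex mxtens.
From mathcomp Require Import ring lra.
Import Order.TTheory GRing.Theory Num.Theory.
Local Open Scope ring_scope.
Import Normc.

(* Since Q^T = L_Q U_Q, the preconditioned collocation matrix
   Q_Delta^-1 Q = L_Q^T is unit upper triangular.  Hence, with
   K = I_L (x) Q_Delta (x) A, the matrix
   N = K^-1 (I_L (x) Q (x) A) - I = I_L (x) (L_Q^T - I) (x) I_N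
   is nilpotent: N^M = 0.  Multiplying P^ T = P^ - C, where T = I - P^^-1 C,
   by K^-1 gives  mu (T + N) = K^-1 (T - F)  with F = E (x) H.  For mu large
   this keeps T bounded, hence T = -N + O(1/mu); as (-N)^k = 0 for k >= M,
   T^k = T^k - (-N)^k = O(1/mu) in the entrywise l1 norm, which is
   submultiplicative and therefore bounds the spectral radius.
   Q_Delta is invertible because Q is: a vector in the kernel of Q^T yields a
   polynomial of degree <= M (an antiderivative of a combination of Lagrange
   polynomials) vanishing at 0 and at the M distinct nonzero Radau nodes. *)

Section EntrywiseNorm.
Context {R : rcfType}.
Implicit Types (x : R[i]) (a b : R).

Lemma normc_ge0 x : 0 <= normc x.
Proof. by case: x => u v; apply: sqrtr_ge0. Qed.

Lemma normc_gt0 x : (0 < normc x) = (x != 0).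
Proof.
rewrite lt_def normc_ge0 andbT; apply/idP/idP; apply: contraNN => /eqP.
  by move->; rewrite normc0.
by move/eq0_normc->.
Qed.

Lemma normcR a : normc (a%:C)%C = `|a|.
Proof. by rewrite /normc /= expr0n addr0 sqrtr_sqr. Qed.

Lemma ler_normc_sum (I : Type) (r : seq I) (P : pred I) (F : I -> R[i]) :
  normc (\sum_(i <- r | P i) F i) <= \sum_(i <- r | P i) normc (F i).
Proof.
elim/big_rec2: _ => [|i y1 y2 _ IH]; first by rewrite normc0.
by apply: le_trans (le_normcD _ _) _; rewrite lerD2l.
Qed.

Definition mxnorm {m n} (A : 'M[R[i]]_(m, n)) : R :=
  \sum_i \sum_j normc (A i j).

Lemma mxnorm_ge0 {m n} (A : 'M[R[i]]_(m, n)) : 0 <= mxnorm A.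
Proof. by do 2![apply: sumr_ge0 => ? _]; apply: normc_ge0. Qed.

Lemma mxnorm0 m n : mxnorm (0 : 'M[R[i]]_(m, n)) = 0.
Proof. by do 2![apply: big1 => ? _]; rewrite mxE normc0. Qed.

Lemma mxnormD {m n} (A B : 'M[R[i]]_(m, n)) :
  mxnorm (A + B) <= mxnorm A + mxnorm B.
Proof.
rewrite /mxnorm -big_split; apply: ler_sum => i _.
by rewrite -big_split; apply: ler_sum => j _; rewrite mxE le_normcD.
Qed.

Lemma mxnormN {m n} (A : 'M[R[i]]_(m, n)) : mxnorm (- A) = mxnorm A.
Proof. by do 2![apply: eq_bigr => ? _]; rewrite mxE normcN. Qed.

Lemma mxnormB {m n} (A B : 'M[R[i]]_(m, n)) :
  mxnorm (A - B) <= mxnorm A + mxnorm B.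
Proof. by rewrite -(mxnormN B) mxnormD. Qed.

Lemma mxnormZ {m n} x (A : 'M[R[i]]_(m, n)) :
  mxnorm (x *: A) = normc x * mxnorm A.
Proof.
rewrite /mxnorm mulr_sumr; apply: eq_bigr => i _; rewrite mulr_sumr.
by apply: eq_bigr => j _; rewrite mxE normcM.
Qed.

Lemma mxnorm_row {m n} (A : 'M[R[i]]_(m, n)) i :
  \sum_j normc (A i j) <= mxnorm A.
Proof.
rewrite /mxnorm (bigD1 i) //= lerDl.
by do 2![apply: sumr_ge0 => ? _]; apply: normc_ge0.
Qed.

Lemma mxnormM {m n p} (A : 'M[R[i]]_(m, n)) (B : 'M[R[i]]_(n, p)) :
  mxnorm (A *m B) <= mxnorm A * mxnorm B.
Proof.
rewrite [mxnorm A]/mxnorm mulr_suml; apply: ler_sum => i _.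
apply: (@le_trans _ _ (\sum_j \sum_l normc (A i l) * normc (B l j))).
  apply: ler_sum => j _; rewrite mxE; apply: le_trans (ler_normc_sum _ _ _ _) _.
  by apply: ler_sum => l _; rewrite normcM.
rewrite exchange_big /= mulr_suml; apply: ler_sum => l _.
by rewrite -mulr_sumr; apply: ler_wpM2l; [apply: normc_ge0 | apply: mxnorm_row].
Qed.

Section Square.
Context {n : nat}.
Implicit Types X Y B : 'M[R[i]]_n.

Lemma mxnorm1 : mxnorm (1%:M : 'M[R[i]]_n) = n%:R.
Proof.
rewrite /mxnorm -[n in RHS]card_ord -sumr_const; apply: eq_bigr => i _.
rewrite (bigD1 i) //= big1 => [|j ji]; first by rewrite mxE eqxx normc1 addr0.
by rewrite mxE eq_sym (negPf ji) normc0.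
Qed.

Lemma mxnormX X k : mxnorm (X ^+ k) <= n%:R * mxnorm X ^+ k.
Proof.
elim: k => [|k IH]; first by rewrite !expr0 mulr1 mxnorm1.
rewrite exprS -mulmxE [_ ^+ k.+1]exprS mulrCA.
exact: le_trans (mxnormM _ _) (ler_wpM2l (mxnorm_ge0 _) IH).
Qed.

Lemma mxnorm_subX X Y b k : mxnorm X <= b -> mxnorm Y <= b ->
  mxnorm (X ^+ k - Y ^+ k) <= k%:R * n%:R * b ^+ k.-1 * mxnorm (X - Y).
Proof.
move=> Xb Yb; have b0 : 0 <= b := le_trans (mxnorm_ge0 _) Xb.
elim: k => [|k IH]; first by rewrite subrr mxnorm0 !mul0r.
have -> : X ^+ k.+1 - Y ^+ k.+1 = X *m (X ^+ k - Y ^+ k) + (X - Y) *m Y ^+ k.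
  by rewrite !mulmxE mulrBr mulrBl -!exprS addrA subrK.
apply: le_trans (mxnormD _ _) _.
have hX : mxnorm (X *m (X ^+ k - Y ^+ k))
    <= b * (k%:R * n%:R * b ^+ k.-1 * mxnorm (X - Y)).
  exact: le_trans (mxnormM _ _) (ler_pM (mxnorm_ge0 _) (mxnorm_ge0 _) Xb IH).
have hY : mxnorm ((X - Y) *m Y ^+ k) <= mxnorm (X - Y) * (n%:R * b ^+ k).
  apply: le_trans (mxnormM _ _) (ler_wpM2l (mxnorm_ge0 _) _).
  apply: le_trans (mxnormX _ _) (ler_wpM2l (ler0n _ _) _).
  exact: lerXn2r _ (mxnorm_ge0 _) b0 Yb.
apply: le_trans (lerD hX hY) _; rewrite le_eqVlt; apply/predU1P; left.
by case: k {IH hX hY} => [|k] /=; rewrite ?exprS; ring.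
Qed.

Lemma eigenvalue_normc_le B z : eigenvalue B z -> normc z <= mxnorm B.
Proof.
move=> /eigenvalueP [v Bv v0].
have v_gt0 : 0 < mxnorm v.
  have [j vj] : exists j, v 0 j != 0.
    apply/existsP; apply: contraR v0; rewrite negb_exists => /forallP v0j.
    by apply/eqP/matrixP => i j; rewrite ord1 mxE; apply/eqP/negPn/v0j.
  rewrite /mxnorm big_ord1 (bigD1 j) //= ltr_pwDl ?normc_gt0 //.
  by apply: sumr_ge0 => l _; apply: normc_ge0.
rewrite -(ler_pM2r v_gt0) [mxnorm B * _]mulrC -mxnormZ -Bv; exact: mxnormM.
Qed.

End Square.
End EntrywiseNorm.

Section Collocation.
Context {R : realType}.
Implicit Types p : {poly R}.

Lemma coef_prim p i :
  (prim p)`_i = if i is i'.+1 then p`_i' / i'.+1%:R else 0.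
Proof.
rewrite coef_poly; case: ltnP => //; case: i => // i.
by rewrite ltnS => /(nth_default 0) ->; rewrite mul0r.
Qed.

Fact prim_is_linear : linear (@prim R).
Proof.
move=> a p q; apply/polyP => -[|i].
  by rewrite !(coefD, coefZ, coef_prim) addr0 mulr0.
by rewrite !(coefD, coefZ, coef_prim) mulrDl mulrA.
Qed.

HB.instance Definition _ :=
  GRing.isLinear.Build R {poly R} {poly R} *:%R (@prim R) prim_is_linear.

Lemma size_prim p : (size (prim p) <= (size p).+1)%N.
Proof. exact: size_poly. Qed.

Lemma root_prim0 p : root (prim p) 0.
Proof. by rewrite /root horner_coef0 coef_prim. Qed.

Lemma prim_eq0 p : (prim p == 0) = (p == 0).
Proof.
apply/eqP/eqP => [p0|->]; last exact: linear0.
apply/polyP => i; have /eqP := congr1 (fun q : {poly R} => q`_i.+1) p0.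
by rewrite coef_prim !coef0 mulf_eq0 invr_eq0 pnatr_eq0 orbF => /eqP.
Qed.

Section Lagrange.
Variables (M : nat) (tau : 'I_M -> R).

Lemma horner_lagrange_node i j : injective tau ->
  (Defs.lagrange tau j).[tau i] = (i == j)%:R.
Proof.
move=> tau_inj; rewrite horner_prod.
under eq_bigr do rewrite hornerM hornerXsubC hornerC.
have [->|ij] := eqVneq i j; last by rewrite (bigD1 i) //= subrr !mul0r.
rewrite big1 // => k kj; rewrite divff // subr_eq0.
by apply: contra kj => /eqP/tau_inj ->.
Qed.

Lemma size_lagrange j : (size (Defs.lagrange tau j) <= M)%N.
Proof.
have size_factor k :
    (size (('X - (tau k)%:P) * (tau j - tau k)^-1%:P)%R <= 2)%N.
  by rewrite mulrC mul_polyC (leq_trans (size_scale_leq _ _)) ?size_XsubC.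
have card_factors : #|(fun k : 'I_M => k != j)| = M.-1.
  by rewrite -[in RHS](card_ord M) -(cardC1 j); apply: eq_card.
have := leq_sum (index_enum _) (fun k (_ : k != j) => size_factor k).
rewrite sum_nat_const card_factors => size_sum.
apply: leq_trans (size_poly_prod_leq _ _) _; rewrite card_factors.
rewrite leq_subLR (leq_ltn_trans size_sum) // muln2 -addnn ltn_add2l ltn_predL.
exact: leq_ltn_trans (leq0n j) (ltn_ord j).
Qed.

Lemma collocQ_unit : injective tau -> (forall m, tau m != 0) ->
  collocQ tau \in unitmx.
Proof.
move=> tau_inj tau_neq0; rewrite -unitmx_tr unitmxE unitfE.
apply/det0P => -[v v_neq0 vQ0].
pose p := \sum_j v 0 j *: Defs.lagrange tau j.
have prim_p_tau m : root (prim p) (tau m).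
  move/matrixP: vQ0 => /(_ 0 m); rewrite !mxE => vQm.
  rewrite /root -[X in _ == X]vQm linear_sum horner_sum.
  by apply/eqP/eq_bigr => j _; rewrite linearZ hornerZ !mxE.
have sizep : (size p <= M)%N.
  apply: (big_ind (fun q : {poly R} => size q <= M)%N).
  - by rewrite size_poly0.
  - by move=> q r qM rM; rewrite (leq_trans (size_polyD _ _)) // geq_max qM rM.
  - by move=> j _; apply: leq_trans (size_scale_leq _ _) (size_lagrange j).
have : prim p == 0.
  apply: contraT => prim_p_neq0.
  have /= := max_poly_roots prim_p_neq0
    (rs := 0 :: [seq tau m | m <- enum 'I_M]).
  rewrite root_prim0 map_inj_uniq // enum_uniq size_map size_enum_ord andbT.
  have -> : 0 \notin [seq tau m | m <- enum 'I_M].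
    by apply/mapP => -[m _ /esym/eqP]; apply/negP/tau_neq0.
  have -> /= : all (root (prim p)) [seq tau m | m <- enum 'I_M].
    by apply/allP => _ /mapP[m _ ->].
  by move/(_ isT isT); rewrite ltnNge (leq_trans (size_prim p)) ?ltnS.
rewrite prim_eq0 => /eqP p0; apply/negP: v_neq0; rewrite negbK.
apply/eqP/matrixP => i j; rewrite ord1 mxE.
have := congr1 (horner^~ (tau j)) p0; rewrite horner0 horner_sum (bigD1 j) //=.
rewrite big1 => [|l lj]; rewrite hornerZ horner_lagrange_node //.
  by rewrite eqxx mulr1 addr0.
by rewrite eq_sym (negPf lj) mulr0.
Qed.

End Lagrange.

Lemma radau_poly_neq0_at0 M : ~~ root (radau_poly R M) 0.
Proof.
rewrite /root /radau_poly horner_coef0 coef_derivn addn0 coefXnM ltnn subnn.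
rewrite -horner_coef0 !hornerE ffactnn.
by rewrite mulrn_eq0 negb_or -lt0n fact_gt0 expf_eq0 oppr_eq0 oner_eq0 andbF.
Qed.

Lemma gauss_radau_collocQ_unit {M} {tau : 'I_M -> R} :
  gauss_radau_nodes tau -> collocQ tau \in unitmx.
Proof.
move=> [tau_mono tau_root]; apply: collocQ_unit => [i j tij|m].
  case: (ltngtP i j) => [ij|ji|/val_inj //].
    by have := tau_mono _ _ ij; rewrite tij ltxx.
  by have := tau_mono _ _ ji; rewrite tij ltxx.
by apply: contraNneq _ (radau_poly_neq0_at0 M) => <-.
Qed.

End Collocation.

Lemma strict_upper_mx_nilpotent (Rg : pzRingType) n (B : 'M[Rg]_n) k :
  (forall i j : 'I_n, (j <= i)%N -> B i j = 0) -> (n <= k)%N -> B ^+ k = 0.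
Proof.
move=> B_strict nk.
have Bl_band l (i j : 'I_n) : (j < i + l)%N -> (B ^+ l) i j = 0.
  elim: l i j => [|l IHl] i j ji.
    by rewrite addn0 in ji; rewrite expr0 mxE -val_eqE (gtn_eqF ji).
  rewrite exprSr -mulmxE mxE big1 // => h _.
  have [hil|ilh] := ltnP h (i + l); first by rewrite IHl ?mul0r.
  by rewrite B_strict ?mulr0 // (leq_trans _ ilh) // -ltnS -addnS.
apply/matrixP => i j; rewrite mxE Bl_band //.
exact: leq_trans (ltn_ord j) (leq_trans nk (leq_addl _ _)).
Qed.

Section Kronecker.
Variable Rg : comPzRingType.

Lemma tensmx11 m p : (1%:M : 'M[Rg]_m) *t (1%:M : 'M[Rg]_p) = 1%:M.
Proof.
apply/matrixP => i j.
case: (mxtens_indexP i) => i1 i2; case: (mxtens_indexP j) => j1 j2.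
rewrite tensmxE !mxE (inj_eq (can_inj (@mxtens_indexK _ _))) xpair_eqE.
by case: (i1 == j1); case: (i2 == j2); rewrite ?mulr1 ?mulr0.
Qed.

Lemma tensmxBl m n p q (A B : 'M[Rg]_(m, n)) (C : 'M[Rg]_(p, q)) :
  (A - B) *t C = A *t C - B *t C.
Proof. by apply/matrixP => i j; rewrite !mxE mulrBl. Qed.

Lemma tensmxBr m n p q (A B : 'M[Rg]_(m, n)) (C : 'M[Rg]_(p, q)) :
  C *t (A - B) = C *t A - C *t B.
Proof. by apply/matrixP => i j; rewrite !mxE mulrBr. Qed.

Lemma tensmx1X1 l m p (X : 'M[Rg]_m) j :
  ((1%:M : 'M[Rg]_l) *t (X *t (1%:M : 'M[Rg]_p))) ^+ j
  = 1%:M *t (X ^+ j *t 1%:M).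
Proof.
elim: j => [|j IHj]; first by rewrite !expr0 !tensmx11.
by rewrite exprS IHj -mulmxE !tensmx_mul !mul1mx mulmxE -exprS.
Qed.

End Kronecker.

Lemma smoother_error_eq (Rg : comPzRingType) n (Ki K Kq F T : 'M[Rg]_n) m :
  Ki *m K = 1%:M ->
  (1%:M - m *: K) *m T = (1%:M - m *: K) - (1%:M - m *: Kq - F) ->
  m *: (T + (Ki *m Kq - 1%:M)) = Ki *m (T - F).
Proof.
move=> KiK /(congr1 (mulmx Ki)).
rewrite mulmxA !mulmxBr mulmx1 -!scalemxAr KiK mulmxBl -scalemxAl mul1mx.
move: (Ki *m T) (Ki *m Kq) (Ki *m F) => KiT KiKq KiF E.
apply/matrixP => i j; move/matrixP: E => /(_ i j); rewrite !mxE => E.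
move/eqP: E; rewrite -subr_eq0 => /eqP E0.
by rewrite -[RHS]subr0 -E0; ring.
Qed.

Lemma nilpotent_perturbation_bound {R : rcfType} {n k} (Ki F N0 : 'M[R[i]]_n) :
  N0 ^+ k = 0 ->
  exists mu0 : R, 0 < mu0 /\ exists c : R, 0 < c /\
  forall (mu : R) T, mu0 < mu ->
    (mu%:C)%C *: (T + N0) = Ki *m (T - F) -> mxnorm (T ^+ k) <= c / mu.
Proof.
move=> N0k; set a := mxnorm N0; set b := mxnorm Ki; set f := mxnorm F.
have [a0 b0 f0] : [/\ 0 <= a, 0 <= b & 0 <= f] by split; apply: mxnorm_ge0.
set beta := 2 * a + f.
set c := k%:R * n%:R * beta ^+ k.-1 * (2 * b * (a + f)).
have c0 : 0 <= c.
  by rewrite !mulr_ge0 ?exprn_ge0 ?addr_ge0 //; rewrite /beta; lra.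
exists (2 * b + 1); split; first lra.
exists (c + 1); split; first lra.
move=> mu T mu_gt eqT; have mu0 : 0 < mu by lra.
set t := mxnorm T; set s := mxnorm (T + N0).
have t0 : 0 <= t by apply: mxnorm_ge0.
have mu_s : mu * s <= b * (t + f).
  rewrite -[mu in mu * _](ger0_norm (ltW mu0)) -normcR -mxnormZ eqT.
  exact: le_trans (mxnormM _ _) (ler_wpM2l b0 (mxnormB _ _)).
have t_le_beta : t <= beta.
  have t_le : t <= s + a by rewrite /t -{1}[T](addrK N0); apply: mxnormB.
  have h1 : mu * t <= mu * (s + a) := ler_wpM2l (ltW mu0) t_le.
  have h2 : 2 * b * t <= mu * t by apply: (ler_wpM2r t0); lra.
  have h3 : 2 * b * f <= mu * f by apply: (ler_wpM2r f0); lra.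
  rewrite -(ler_pM2l mu0) /beta; lra.
have mu_s_le : mu * s <= 2 * b * (a + f).
  have : b * (t + f) <= b * (2 * a + 2 * f).
    by apply: (ler_wpM2l b0); rewrite /beta in t_le_beta; lra.
  lra.
have Tk : mxnorm (T ^+ k) <= k%:R * n%:R * beta ^+ k.-1 * s.
  have N0_le : mxnorm (- N0) <= beta by rewrite mxnormN -/a /beta; lra.
  have := mxnorm_subX _ _ _ k t_le_beta N0_le.
  by rewrite exprNn N0k mulr0 subr0 opprK.
set K := k%:R * n%:R * beta ^+ k.-1 in c c0 Tk *.
have K0 : 0 <= K by rewrite !mulr_ge0 ?exprn_ge0 //; rewrite /beta; lra.
have h1 : mxnorm (T ^+ k) * mu <= K * s * mu := ler_wpM2r (ltW mu0) Tk.
have h2 : K * (mu * s) <= K * (2 * b * (a + f)) := ler_wpM2l K0 mu_s_le.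
rewrite ler_pdivlMr // /c; lra.
Qed.

Lemma spectral_radius_le_mxnorm {R : realType} {n} (B : 'M[R[i]]_n) :
  spectral_radius B <= mxnorm B.
Proof.
rewrite /spectral_radius big_seq.
apply: (big_ind (fun x => x <= mxnorm B)); first exact: mxnorm_ge0.
  by move=> x y xB yB; rewrite ge_max xB yB.
move=> z; rewrite /eigenvalues.
case: closed_field_poly_normal => rs /= charB zrs.
(* [Re `|z|] computes to [normc z]. *)
apply: eigenvalue_normc_le; rewrite eigenvalue_root_char charB.
by rewrite (monicP (char_poly_monic B)) scale1r root_prod_XsubC.
Qed.

Section Complexification.
Variable R : realType.

Lemma cplx_mxM m n p (A : 'M[R]_(m, n)) (B : 'M[R]_(n, p)) :
  cplx_mx (A *m B) = cplx_mx A *m cplx_mx B.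
Proof. exact: map_mxM. Qed.

Lemma cplx_mx_unit n (A : 'M[R]_n) : (cplx_mx A \in unitmx) = (A \in unitmx).
Proof. exact: map_unitmx. Qed.

End Complexification.

Lemma smoother_step_eq (R : realType) L M N (Q QD : 'M[R]_M) (A : 'M[R[i]]_N)
    (mu : R) :
  QD \in unitmx -> A \in unitmx -> sdc_Phat L QD A mu \in unitmx ->
  let T := 1%:M - invmx (sdc_Phat L QD A mu) *m sdc_C L Q A mu in
  (mu%:C)%C *: (T + 1%:M *t ((invmx (cplx_mx QD) *m cplx_mx Q - 1%:M) *t 1%:M))
  = 1%:M *t (invmx (cplx_mx QD) *t invmx A)
    *m (T - subdiag_mx R L *t (lastcol_mx R M *t 1%:M)).
Proof.
move=> uQD uA uP T.
have uQD' : cplx_mx QD \in unitmx by rewrite cplx_mx_unit.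
have -> : 1%:M *t ((invmx (cplx_mx QD) *m cplx_mx Q - 1%:M) *t 1%:M)
  = 1%:M *t (invmx (cplx_mx QD) *t invmx A) *m (1%:M *t (cplx_mx Q *t A)) - 1%:M
  :> 'M_(L * (M * N)).
  by rewrite !tensmx_mul mul1mx mulVmx // tensmxBl tensmxBr !tensmx11.
apply: (@smoother_error_eq _ _ _ (1%:M *t (cplx_mx QD *t A))).
  by rewrite !tensmx_mul mul1mx !mulVmx // !tensmx11.
by rewrite /T mulmxBr mulmx1 mulmxA mulmxV // mul1mx.
Qed.

Theorem lemma2 (R : realType) (L M N : nat)
  (tau : 'I_M -> R) (LQ UQ : 'M[R]_M) (A : 'M[R[i]]_N) :
  (0 < L)%N -> (0 < M)%N -> (0 < N)%N ->
  gauss_radau_nodes tau ->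
  unit_lower_triangular LQ -> upper_triangular UQ ->
  (collocQ tau)^T = LQ *m UQ ->
  A \in unitmx ->
  forall k : nat, (M <= k)%N ->
  exists mustar : R, 0 < mustar /\
  exists c : R, 0 < c /\
  forall mu : R, mustar < mu ->
    sdc_Phat L UQ^T A mu \in unitmx ->
    spectral_radius (smoother_T L (collocQ tau) UQ^T A mu k) <= c / mu.
Proof.
move=> _ _ _ nodes [/is_trig_mxP LQ_trig LQ_diag] _ QLU uA k Mk.
have uQD : UQ^T \in unitmx.
  move: (gauss_radau_collocQ_unit nodes); rewrite -unitmx_tr QLU unitmx_mul.
  by rewrite unitmx_tr => /andP[].
have QD_Q : invmx (cplx_mx UQ^T) *m cplx_mx (collocQ tau) = cplx_mx LQ^T.
  by rewrite -[collocQ tau]trmxK QLU trmx_mul cplx_mxM mulKmx ?cplx_mx_unit.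
have LQ_nil : (cplx_mx LQ^T - 1%:M) ^+ k = 0.
  apply: strict_upper_mx_nilpotent Mk => i j.
  rewrite leq_eqVlt => /predU1P[/val_inj->|ji].
    by rewrite !mxE LQ_diag eqxx subrr.
  by rewrite !mxE -val_eqE (gtn_eqF ji) subr0 LQ_trig.
have N0_nil :
    (1%:M *t ((cplx_mx LQ^T - 1%:M) *t 1%:M) : 'M_(L * (M * N))) ^+ k = 0.
  by rewrite tensmx1X1 LQ_nil tens0mx tensmx0.
have [mu0 [mu0_gt0 [c [c_gt0 Tk_bound]]]] := nilpotent_perturbation_bound
  (1%:M *t (invmx (cplx_mx UQ^T) *t invmx A))
  (subdiag_mx R L *t (lastcol_mx R M *t 1%:M)) _ N0_nil.
exists mu0; split => //; exists c; split => // mu mu_gt uP.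
apply: le_trans (spectral_radius_le_mxnorm _) (Tk_bound mu _ mu_gt _).
by rewrite -QD_Q; apply: smoother_step_eq.
Qed.
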